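(* Let $f:\mathbb{R}^n\to\mathbb{R}$ be differentiable and strongly convex, and let $x^*$ be its unique minimizer. Let $(x^k)$ be the sequence generated by the Method of Ellipcenters (ME) described in the context, started from an arbitrary point. If the method does not stop, then $\lim_{k\to+\infty}x^k=x^*$.
   Context: $\langle\cdot,\cdot\rangle$ and $\|\cdot\|$ denote the Euclidean inner product and norm. A function $f:\mathbb{R}^n\to\mathbb{R}$ is strongly convex with constant $\mu>0$ if $f(tx+(1-t)y)\le tf(x)+(1-t)f(y)-\frac{\mu t(1-t)}{2}\|y-x\|^2$ for all $x,y\in\mathbb{R}^n$, $t\in[0,1]$. Method of Ellipcenters (ME): given an initial point $x^0$, at iteration $k$: (1) if $\nabla f(x^k)=0$, stop. (2) Otherwise let $t_k>0$ be the (unique) positive number with $f(x^k-t_k\nabla f(x^k))=f(x^k)$ and set $y^k=x^k-t_k\nabla f(x^k)$. (3) If $\nabla f(x^k)$ and $\nabla f(y^k)$ are linearly dependent, set $x^{k+1}=\frac12(x^k+y^k)$. Otherwise compute $\cos\theta_k=\frac{\langle x^k-y^k,-\nabla f(y^k)\rangle}{\|x^k-y^k\|\,\|\nabla f(y^k)\|}$, $\sin\theta_k=\sqrt{1-\cos^2\theta_k}$, $w^k=-\nabla f(y^k)+\frac{\langle x^k-y^k,\nabla f(y^k)\rangle}{\|x^k-y^k\|^2}(x^k-y^k)$, $d^k=\frac{w^k}{\|w^k\|}-\frac{\sin\theta_k}{2\cos\theta_k}\frac{x^k-y^k}{\|x^k-y^k\|}$, and let $x^{k+1}$ be a minimizer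 of $f$ over the semiline $\{\frac12(x^k+y^k)+v d^k: v\ge 0\}$ (this semiline is the set of centers of ellipses in the plane $x^k+\mathrm{span}\{\nabla f(x^k),\nabla f(y^k)\}$ passing through $x^k$ and $y^k$ and orthogonal to $\nabla f(x^k)$ at $x^k$ and to $\nabla f(y^k)$ at $y^k$). *)

From HB Require Import structures.
From mathcomp Require Import all_boot all_order all_algebra.
From mathcomp Require Import all_classical all_reals all_analysis.
Set Implicit Arguments. Unset Strict Implicit. Unset Printing Implicit Defensive.
Import Order.TTheory GRing.Theory Num.Theory.
Import numFieldNormedType.Exports.
Local Open Scope ring_scope.

Section ME.
Variables (R : realType) (n : nat).
Implicit Types (u v x y : 'rV[R]_n) (f : 'rV[R]_n -> R).

Definition dotp u v : R := \sum_(i < n) u 0 i * v 0 i.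
Definition enorm u : R := Num.sqrt (dotp u u).

Definition strongly_convex f (mu : R) : Prop :=
  forall x y (t : R), 0 <= t <= 1 ->
    f (t *: x + (1 - t) *: y) <= t * f x + (1 - t) * f y
                                 - mu * t * (1 - t) / 2 * enorm (y - x) ^+ 2.

Definition grad f x : 'rV[R]_n := \row_(i < n) ('d f x (delta_mx 0 i : 'rV[R]_n)).

Definition lin_dep u v : Prop :=
  exists a b : R, (a != 0 \/ b != 0) /\ a *: u + b *: v = 0.

(* One iteration of the Method of Ellipcenters from xk producing xk1
   (assuming grad f xk <> 0, i.e. the method does not stop). *)
Definition ME_step f x x' : Prop :=
  exists t : R, 0 < t /\ f (x - t *: grad f x) = f x /\
  let y := x - t *: grad f x in
  let m := 2^-1 *: (x + y) in
  (lin_dep (grad f x) (grad f y) -> x' = m) /\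
  (~ lin_dep (grad f x) (grad f y) ->
     let gy := grad f y in
     let cos := dotp (x - y) (- gy) / (enorm (x - y) * enorm gy) in
     let sin := Num.sqrt (1 - cos ^+ 2) in
     let w := - gy + (dotp (x - y) gy / enorm (x - y) ^+ 2) *: (x - y) in
     let d := (enorm w)^-1 *: w - (sin / (2 * cos) / enorm (x - y)) *: (x - y) in
     exists v : R, 0 <= v /\ x' = m + v *: d /\
       forall u : R, 0 <= u -> f x' <= f (m + u *: d)).

Definition ME_sequence f (xs : nat -> 'rV[R]_n) : Prop :=
  forall k, grad f (xs k) != 0 /\ ME_step f (xs k) (xs k.+1).

End ME.

(* Each iterate is no worse than the midpoint of the level-set chord
   [x^k, x^k - t_k grad f(x^k)], so strong convexity makes f drop by at least
   mu/8 (t_k |grad f(x^k)|)^2 per step: the values f(x^k) converge and the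
   chords shrink to 0.  If the limit were above min f, the iterates would stay
   bounded with gradients bounded away from 0; at a cluster point p, where f is
   well approximated by its tangent plane, such level chords cannot be short.
   So f(x^k) -> min f, and strong convexity turns this into x^k -> x^*. *)

From HB Require Import structures.
From mathcomp Require Import all_boot all_order all_algebra.
From mathcomp Require Import all_classical all_reals all_analysis.
From mathcomp Require Import ring lra.
Set Implicit Arguments. Unset Strict Implicit. Unset Printing Implicit Defensive.
Import Order.TTheory GRing.Theory Num.Theory.
Import numFieldNormedType.Exports.
Local Open Scope classical_set_scope.
Local Open Scope ring_scope.

Section Euclidean.
Variables (R : realType) (n : nat).
Implicit Types (u v w : 'rV[R]_n).

Lemma dotpC u v : dotp u v = dotp v u.
Proof. by apply: eq_bigr => i _; rewrite mulrC. Qed.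

Lemma dotpDl u v w : dotp (u + v) w = dotp u w + dotp v w.
Proof. by rewrite /dotp -big_split; apply: eq_bigr => i _; rewrite mxE mulrDl. Qed.

Lemma dotpZl (a : R) u w : dotp (a *: u) w = a * dotp u w.
Proof. by rewrite /dotp mulr_sumr; apply: eq_bigr => i _; rewrite mxE mulrA. Qed.

Lemma dotpNl u w : dotp (- u) w = - dotp u w.
Proof. by rewrite -scaleN1r dotpZl mulN1r. Qed.

Lemma dotpBl u v w : dotp (u - v) w = dotp u w - dotp v w.
Proof. by rewrite dotpDl dotpNl. Qed.

Lemma dotpZr (a : R) u w : dotp w (a *: u) = a * dotp w u.
Proof. by rewrite dotpC dotpZl dotpC. Qed.

Lemma dotpNr u w : dotp w (- u) = - dotp w u.
Proof. by rewrite dotpC dotpNl dotpC. Qed.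

Lemma dotpBr u v w : dotp w (u - v) = dotp w u - dotp w v.
Proof. by rewrite !(dotpC w) dotpBl. Qed.

Lemma dotp_ge0 u : 0 <= dotp u u.
Proof. by apply: sumr_ge0 => i _; rewrite -expr2 sqr_ge0. Qed.

Lemma enorm_sqr u : enorm u ^+ 2 = dotp u u.
Proof. by rewrite /enorm sqr_sqrtr // dotp_ge0. Qed.

Lemma enorm_ge0 u : 0 <= enorm u.
Proof. exact: sqrtr_ge0. Qed.

Lemma dotp_le_sqr u v : 2 * dotp u v <= dotp u u + dotp v v.
Proof.
have := dotp_ge0 (u - v); rewrite dotpBl !dotpBr (dotpC v u); lra.
Qed.

Lemma sqr_le_mul_dotp u v (c b : R) : 0 < c -> 0 < b ->
  c <= dotp u v -> dotp v v <= b -> c ^+ 2 <= b * dotp u u.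
Proof.
move=> c0 b0 c_uv vb; set l := c / b.
have l0 : 0 < l by rewrite divr_gt0.
have lb : l * b = c by rewrite /l divfK ?gt_eqF.
have := dotp_le_sqr u (l *: v); rewrite dotpZr dotpZl dotpZr.
have : l * (l * dotp v v) <= l * c by rewrite -lb !ler_pM2l.
have : l * c <= l * dotp u v by rewrite ler_pM2l.
nra.
Qed.

(* [`|v|] is the max-entry norm of the normed-module structure on matrices,
   not the Euclidean norm [enorm v]. *)
Lemma mx_norm_sqr_le_dotp v : `|v| ^+ 2 <= dotp v v.
Proof.
have [v0|] := eqVneq (mx_norm v) 0.
  have -> : `|v| = 0 by exact: v0.
  by rewrite expr0n /= dotp_ge0.
move=> /mx_norm_neq0 [[i j] vij]; have -> : `|v| = `|v i j| by exact: vij.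
rewrite (ord1 i) real_normK ?num_real // expr2 /dotp (bigD1 j) //= lerDl.
by apply: sumr_ge0 => k _; rewrite -expr2 sqr_ge0.
Qed.

End Euclidean.

Section Differential.
Variables (R : realType) (n : nat) (f : 'rV[R]_n -> R).
Implicit Types (p x v w h : 'rV[R]_n).

Lemma diff_grad x v : 'd f x v = dotp (grad f x) v.
Proof.
rewrite {1}(row_sum_delta v) linear_sum /dotp.
by apply: eq_bigr => i _; rewrite linearZ /= mxE mulrC.
Qed.

Lemma diff_remainder_le p : differentiable f p -> forall e : R, 0 < e ->
  exists2 r : R, 0 < r & forall h, `|h| < r ->
    `|f (p + h) - f p - 'd f p h| <= e * `|h|.
Proof.
move=> /diff_locally; rewrite funeqE => fE e e0.
set k := 'o _ in fE.
have /(littleoP [littleo of k]) /nbhs_ballP[r r0 kr] := e0.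
exists r => // h hr; rewrite [p + h]addrC; have /= -> := fE h.
have -> : f p + 'd f p h + k h - f p - 'd f p h = k h by ring.
by apply: kr; rewrite -ball_normE /= sub0r normrN.
Qed.

Lemma second_difference_le p (e r : R) w v : 0 <= e ->
  (forall h, `|h| < r -> `|f (p + h) - f p - 'd f p h| <= e * `|h|) ->
  `|w| + `|v| < r ->
  f (p + w + v) + f (p + w - v) - 2 * f (p + w) <= 2 * e * (2 * `|w| + `|v|).
Proof.
move=> e0 rem wvr.
have wDv : `|w + v| <= `|w| + `|v| := ler_normD w v.
have wBv : `|w - v| <= `|w| + `|v| by rewrite -(normrN v) ler_normD.
have wr : `|w| < r by apply: le_lt_trans wvr; rewrite lerDl.
have := rem _ (le_lt_trans wDv wvr); have := rem _ (le_lt_trans wBv wvr).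
have := rem _ wr; rewrite linearB linearD !addrA /= !ler_norml.
move=> /andP[+ _] /andP[_ +] /andP[_ +].
have : e * `|w + v| <= e * (`|w| + `|v|) by exact: ler_wpM2l.
have : e * `|w - v| <= e * (`|w| + `|v|) by exact: ler_wpM2l.
lra.
Qed.

End Differential.

Section Convexity.
Variables (R : realType) (n : nat) (f : 'rV[R]_n -> R) (mu : R).
Hypotheses (mu_ge0 : 0 <= mu) (sc : strongly_convex f mu).
Implicit Types (x y v xm : 'rV[R]_n).

Lemma strongly_convex_convex x y (t : R) : 0 <= t <= 1 ->
  f (t *: x + (1 - t) *: y) <= t * f x + (1 - t) * f y.
Proof.
move=> /[dup] t01 /andP[t0 t1]; apply: (le_trans (sc x y t01)).
rewrite lerBlDr lerDl; apply: mulr_ge0 (sqr_ge0 _).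
by rewrite !(mulr_ge0, divr_ge0) // subr_ge0.
Qed.

Lemma strongly_convex_midpoint x y :
  f (2^-1 *: (x + y)) <= 2^-1 * (f x + f y) - mu / 8 * dotp (x - y) (x - y).
Proof.
have half01 : 0 <= (2^-1 : R) <= 1.
  by rewrite invr_ge0 ler0n invf_le1 ?ler1n ?ltr0n.
have := sc x y half01.
have -> : 1 - 2^-1 = 2^-1 :> R by field.
rewrite -scalerDr enorm_sqr -[y - x]opprB dotpNl dotpNr opprK.
have -> : mu * 2^-1 * 2^-1 / 2 = mu / 8 by field.
lra.
Qed.

Lemma strongly_convex_gap_ge xm x : (forall z, f xm <= f z) ->
  mu / 4 * dotp (x - xm) (x - xm) <= f x - f xm.
Proof.
move=> fmin; have := le_trans (fmin _) (strongly_convex_midpoint x xm).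
have -> : mu / 4 = 2 * (mu / 8) by field.
lra.
Qed.

Lemma strongly_convex_mx_norm_le xm x : (forall z, f xm <= f z) ->
  mu / 4 * `|x - xm| ^+ 2 <= f x - f xm.
Proof.
move=> fmin; apply: (le_trans _ (strongly_convex_gap_ge x fmin)).
by rewrite ler_wpM2l ?divr_ge0 ?mx_norm_sqr_le_dotp.
Qed.

Lemma convex_level_beyond x v (t s : R) : 0 < t <= s ->
  f (x + t *: v) = f x -> f x <= f (x + s *: v).
Proof.
move=> /andP[t0 ts] fxt; have s0 : 0 < s := lt_le_trans t0 ts.
have ts01 : 0 <= t / s <= 1.
  by rewrite divr_ge0 ?(ltW t0) ?(ltW s0) //= ler_pdivrMr // mul1r.
have := strongly_convex_convex (x + s *: v) x ts01.
rewrite scalerDr scalerA divfK ?gt_eqF // scalerBl scale1r addrAC subrKC fxt.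
have ts0 : 0 < t / s by rewrite divr_gt0.
move=> le_comb; rewrite -(ler_pM2l ts0); lra.
Qed.

(* ['d f x v] is the right limit of difference quotients, each bounded by
   [f (x + v) - f x] through convexity. *)
Lemma convex_grad_le x v : differentiable f x ->
  dotp (grad f x) v <= f (x + v) - f x.
Proof.
move=> dfx; rewrite -diff_grad -deriveE //.
apply: (cvgr_to_le (cvg_dnbhs_at_right (diff_derivable (v := v) dfx))).
near=> h; have h0 : 0 < h by near: h; exact: nbhs_right_gt.
have h01 : 0 <= h <= 1 by rewrite ltW //=; near: h; exact: nbhs_right_le.
have := strongly_convex_convex (x + v) x h01.
rewrite scalerDr scalerBl scale1r addrAC subrKC => le_comb /=.
rewrite [h *: v + x]addrC ler_pdivrMl //; lra.
Unshelve. all: by end_near.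
Qed.

End Convexity.

Lemma strongly_convex_cvg_argmin (R : realType) n (f : 'rV[R]_n -> R) mu xm
    (u : nat -> 'rV[R]_n) :
  0 < mu -> strongly_convex f mu -> (forall z, f xm <= f z) ->
  f (u k) @[k --> \oo] --> f xm -> u k @[k --> \oo] --> xm.
Proof.
move=> mu0 sc fmin fu; apply/cvgrPdist_le => eps eps0.
have gap0 : 0 < mu / 4 * eps ^+ 2 by rewrite mulr_gt0 ?divr_gt0 ?exprn_gt0.
have /cvgrPdist_lt /(_ _ gap0) fu_near := fu.
near=> k.
have := strongly_convex_mx_norm_le (ltW mu0) sc (u k) fmin; rewrite distrC.
have : `|f xm - f (u k)| < mu / 4 * eps ^+ 2 by near: k.
rewrite ltr_norml => /andP[gap_lt _] le_gap.
have : mu / 4 * `|xm - u k| ^+ 2 < mu / 4 * eps ^+ 2 by lra.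
rewrite ltr_pM2l ?divr_gt0 // => /ltW; rewrite ler_pXn2r ?nnegrE //; exact: ltW.
Unshelve. all: by end_near.
Qed.

Lemma ME_step_decrease (R : realType) n (f : 'rV[R]_n -> R) mu x x' :
  strongly_convex f mu -> ME_step f x x' ->
  exists t, [/\ 0 < t, f (x - t *: grad f x) = f x &
    f x' <= f x - mu / 8 * (t * enorm (grad f x)) ^+ 2].
Proof.
move=> sc [t [t0 [fxt [x'_dep x'_ndep]]]]; exists t; split => //.
set g := grad f x in fxt x'_dep x'_ndep *.
set y := x - t *: g in fxt x'_dep x'_ndep *.
have le_mid : f x' <= f (2^-1 *: (x + y)).
  have [dep|ndep] := pselect (lin_dep g (grad f y)); first by rewrite x'_dep.
  have [v [_ [-> v_min]]] := x'_ndep ndep.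
  by have := v_min 0 (lexx 0); rewrite scale0r addr0.
apply: (le_trans le_mid); apply: (le_trans (strongly_convex_midpoint sc x y)).
rewrite fxt /y subKr dotpZl dotpZr exprMn enorm_sqr [t * (t * _)]mulrA -expr2.
lra.
Qed.

(* With v := (d / |g|) g, convexity gives f(x - v) >= f x (the chord of length
   t |g| <= d already returns to level f x) and f(x + v) >= f x + d |g|, so the
   second difference of f at x along v is at least d |g|; the first-order
   expansion at p bounds it by 6 e d <= d |g| / 2. *)
Lemma level_chord_gt (R : realType) n (f : 'rV[R]_n -> R) mu p x (e r d t : R) :
  0 <= mu -> strongly_convex f mu -> differentiable f x -> 0 <= e ->
  (forall h, `|h| < r -> `|f (p + h) - f p - 'd f p h| <= e * `|h|) ->
  0 < d -> 2 * d <= r -> `|x - p| < d ->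
  0 < enorm (grad f x) -> 12 * e <= enorm (grad f x) ->
  0 < t -> f (x - t *: grad f x) = f x -> d < t * enorm (grad f x).
Proof.
move=> mu0 sc dfx e0 rem d0 dr xp c0 ec t0 fxt.
rewrite ltNge; apply/negP => td.
set g := grad f x in c0 ec fxt td *; set c := enorm g in c0 ec td *.
set l := d / c.
have lc : l * c = d by rewrite /l divfK ?gt_eqF.
have tl : t <= l by rewrite -(ler_pM2r c0) lc.
have lg_le : `|l *: g| <= d.
  have := mx_norm_sqr_le_dotp (l *: g); rewrite dotpZl dotpZr -enorm_sqr -/c.
  have := normr_ge0 (l *: g); nra.
have f_back : f x <= f (x - l *: g).
  rewrite -scalerN; apply: (convex_level_beyond mu0 sc (t := t)).
    by rewrite t0.
  by rewrite scalerN.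
have f_fwd : f x + d * c <= f (x + l *: g).
  have := convex_grad_le mu0 sc (l *: g) dfx.
  rewrite dotpZr -enorm_sqr -/c; nra.
have xlg_r : `|x - p| + `|l *: g| < r by lra.
have := second_difference_le e0 rem xlg_r.
rewrite subrKC.
have : 2 * e * (2 * `|x - p| + `|l *: g|) <= 2 * e * (3 * d).
  by rewrite ler_wpM2l ?mulr_ge0 //; lra.
nra.
Qed.

Lemma bounded_seq_cluster (R : realType) n (u : nat -> 'rV[R]_n) c (M : R) :
  (forall k, `|c - u k| <= M) ->
  exists p, forall (d : R) N, 0 < d -> exists2 k, (N <= k)%N & `|p - u k| < d.
Proof.
move=> uM; pose B := closed_ball_ Num.norm c M.
have B_bounded : \forall M0 \near +oo, forall y, B y -> `|y| <= M0.
  near=> M0 => y By.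
  apply: le_trans (_ : `|c| + M <= M0).
    by rewrite -[y](subKr c) (le_trans (ler_normB _ _)) // lerD2l.
  by near: M0; apply: nbhs_pinfty_ge; exact: num_real.
have B_closed : closed B by exact: closed_closed_ball_.
have B_compact := bounded_closed_compact B_bounded B_closed.
have [|p [_ p_cluster]] := B_compact (u @ \oo) _.
  by exists 0%N => // k _; exact: uM.
exists p => d N d0.
have [_ [[k Nk <-] pk]] : [set u k | k in [set k | (N <= k)%N]] `&` ball p d !=set0.
  by apply: p_cluster; [exists N => // k /= Nk; exists k | exact: nbhsx_ballx].
by exists k => //; rewrite -ball_normE in pk.
Unshelve. all: by end_near.
Qed.

Section Convergence.
Variables (R : realType) (n : nat) (f : 'rV[R]_n -> R) (mu : R).
Variables (xstar : 'rV[R]_n) (xs : nat -> 'rV[R]_n).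
Hypotheses (df : forall x, differentiable f x) (mu_gt0 : 0 < mu).
Hypotheses (sc : strongly_convex f mu) (fmin : forall z, f xstar <= f z).
Hypothesis MEs : ME_sequence f xs.

Let mu_ge0 : 0 <= mu := ltW mu_gt0.

Lemma ME_values_nonincreasing : nonincreasing_seq (f \o xs).
Proof.
apply/nonincreasing_seqP => k; have [t [_ _ decr]] := ME_step_decrease sc (MEs k).2.
apply: (le_trans decr); rewrite lerBlDr lerDl.
by apply: mulr_ge0 (sqr_ge0 _); rewrite divr_ge0.
Qed.

Lemma ME_values_cvg : cvgn (f \o xs).
Proof.
apply: (nonincreasing_is_cvgn ME_values_nonincreasing).
by exists (f xstar) => _ [k _ <-]; exact: fmin.
Qed.

Local Notation L := (limn (f \o xs)).

Lemma ME_values_ge_lim k : L <= f (xs k).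
Proof. exact: (nonincreasing_cvgn_ge ME_values_nonincreasing ME_values_cvg). Qed.

Lemma ME_dist_le k :
  dotp (xs k - xstar) (xs k - xstar) <= 4 / mu * (f (xs 0) - f xstar).
Proof.
have gap := strongly_convex_gap_ge sc (xs k) fmin.
have decr : f (xs k) <= f (xs 0) := ME_values_nonincreasing (leq0n k).
rewrite -(ler_pM2l (_ : 0 < mu / 4)) ?divr_gt0 //.
have -> : mu / 4 * (4 / mu * (f (xs 0) - f xstar)) = f (xs 0) - f xstar.
  by field; exact: lt0r_neq0.
lra.
Qed.

Lemma ME_iterates_bounded : exists M, forall k, `|xstar - xs k| <= M.
Proof.
exists (4 / mu * (f (xs 0) - f xstar) + 1) => k; rewrite distrC.
have := le_trans (mx_norm_sqr_le_dotp _) (ME_dist_le k).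
have := normr_ge0 (xs k - xstar); nra.
Qed.

Lemma ME_grad_bounded_below : f xstar < L ->
  exists2 gam, 0 < gam & forall k, gam <= enorm (grad f (xs k)).
Proof.
move=> Lgt; set c := L - f xstar; set b := 4 / mu * (f (xs 0) - f xstar).
have c0 : 0 < c by rewrite subr_gt0.
have b0 : 0 < b.
  by rewrite mulr_gt0 ?divr_gt0 // subr_gt0 (lt_le_trans Lgt (ME_values_ge_lim 0)).
exists (Num.sqrt (c ^+ 2 / b)); first by rewrite sqrtr_gt0 divr_gt0 ?exprn_gt0.
move=> k; rewrite /enorm ler_sqrt ?dotp_ge0 // ler_pdivrMr // mulrC.
apply: (sqr_le_mul_dotp c0 b0 _ (ME_dist_le k)).
have := convex_grad_le mu_ge0 sc (xstar - xs k) (df (xs k)).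
rewrite subrKC -opprB dotpNr.
have := ME_values_ge_lim k; rewrite /c; lra.
Qed.

Lemma ME_chord_vanishes (d : R) : 0 < d -> \forall k \near \oo, exists t,
  [/\ 0 < t, f (xs k - t *: grad f (xs k)) = f (xs k)
    & t * enorm (grad f (xs k)) < d].
Proof.
move=> d0; have gap0 : 0 < mu / 8 * d ^+ 2 by rewrite mulr_gt0 ?divr_gt0 ?exprn_gt0.
have /cvgrPdist_lt /(_ _ gap0) := ME_values_cvg; apply: filterS => k /=.
rewrite ltr_norml => /andP[lim_gap _].
have [t [t0 fxt decr]] := ME_step_decrease sc (MEs k).2.
exists t; split => //.
have ge_lim := ME_values_ge_lim k.+1.
set s := t * enorm (grad f (xs k)) in decr *.
have s0 : 0 <= s by rewrite mulr_ge0 ?enorm_ge0 ?ltW.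
have : mu / 8 * s ^+ 2 < mu / 8 * d ^+ 2 by lra.
rewrite ltr_pM2l ?divr_gt0 //; nra.
Qed.

Lemma ME_values_lim : L = f xstar.
Proof.
apply/eqP; rewrite eq_le (limr_ge ME_values_cvg) ?andbT; last first.
  by apply: nearW => k; exact: fmin.
rewrite leNgt; apply/negP => Lgt.
have [gam gam0 gam_le] := ME_grad_bounded_below Lgt.
have [M xsM] := ME_iterates_bounded.
have [p p_cluster] := bounded_seq_cluster xsM.
have e0 : 0 < gam / 12 by rewrite divr_gt0.
have [r r0 rem] := diff_remainder_le (df p) e0.
have d0 : 0 < r / 2 by rewrite divr_gt0.
have [N _ chord_small] := ME_chord_vanishes d0.
have [k Nk pk] := p_cluster _ N d0.
have [t [t0 fxt td]] := chord_small k Nk.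
have := level_chord_gt mu_ge0 sc (df (xs k)) (ltW e0) rem d0 _ _
  (lt_le_trans gam0 (gam_le k)) _ t0 fxt.
rewrite distrC pk; have := gam_le k; lra.
Qed.

End Convergence.

Theorem theorem1 (R : realType) (n : nat) (f : 'rV[R]_n -> R) (mu : R)
  (xstar : 'rV[R]_n) (xs : nat -> 'rV[R]_n) :
  (forall x, differentiable f x) ->
  0 < mu -> strongly_convex f mu ->
  (forall z, f xstar <= f z) ->
  ME_sequence f xs ->
  xs k @[k --> \oo] --> xstar.
Proof.
move=> df mu0 sc fmin MEs; apply: (strongly_convex_cvg_argmin mu0 sc fmin).
rewrite -(ME_values_lim df mu0 sc fmin MEs); exact: (ME_values_cvg mu0 sc fmin MEs).
Qed.
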